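(* Fix $k\in\{1,\dots,K\}$ and fix the transmit powers $\mathbf{p}_{-k}=(p_j)_{j\neq k}$ of all other users (so that the quantity $D_k>0$ below is fixed). Then the utility function $$u_k(p_k,\mathbf{p}_{-k}) \;=\; \ell_k\,\mathtt{w}\,\log_2\!\bigl(1+\theta_k\gamma_k\bigr)\,\frac{\bigl(1-e^{-\gamma_k}\bigr)^M}{p_k+p_c},\qquad \gamma_k=\frac{p_k|h_k|^2}{D_k},$$ is quasiconcave in $p_k$ on the strategy set $[0,P_{\max}]$, i.e. for all $x_1\neq x_2$ in $[0,P_{\max}]$ and all $\lambda\in(0,1)$, $$u_k(\lambda x_1+(1-\lambda)x_2,\mathbf{p}_{-k})\ \ge\ \min\{u_k(x_1,\mathbf{p}_{-k}),\,u_k(x_2,\mathbf{p}_{-k})\}.$$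
   Context: Uplink DS-CDMA with $K$ users. User $k$ transmits with power $p_k\ge 0$ over a complex channel gain $h_k\neq 0$. $\mathbf{s}_j\in\mathbb{R}^N$ is the unit-norm spreading code of user $j$, $\mathbf{d}_k\in\mathbb{R}^N$ is the linear receive filter for user $k$ (e.g. the matched filter $\mathbf{d}_k=\mathbf{s}_k$, or the $k$-th column of the decorrelator $\mathbf{S}(\mathbf{S}^T\mathbf{S})^{-1}$), normalized so that $\mathbf{d}_k^T\mathbf{s}_k=1$, and $\sigma_k^2>0$ is the noise variance. The SINR is $$\gamma_k=\frac{p_k|h_k|^2}{D_k},\qquad D_k=\sum_{j\neq k}p_j|h_j|^2(\mathbf{d}_k^T\mathbf{s}_j)^2+\sigma_k^2\,\mathbf{d}_k^T\mathbf{d}_k .$$ Constants: bandwidth $\mathtt{w}>0$; $M\ge 1$ is the packet length in bits and $L\le M$ the number of information bits, $\ell_k=L/M$; circuit power $p_c>0$; maximal transmit power $P_{\max}>0$; gap $\theta_k=-1.5/\ln(5\,\mathrm{BER}_k)\in(0,1)$ for a target bit error rate $\mathrm{BER}_k\in(0,1/5)$. The factor $(1-e^{-\gamma_k})^M$ is the efficiency function (probability of error-free packet reception). *)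

From Stdlib Require Import Reals Lra.
Open Scope R_scope.

(* Vectors in R^N are represented as functions nat -> R, of which only
   the components 0..N-1 matter. *)
Definition dot (N : nat) (x y : nat -> R) : R :=
  sum_f_R0 (fun i => x i * y i) (pred N).
(* Note: for N >= 1, sum_f_R0 over 0..N-1. We require N >= 1 in the statement. *)

(* Complex channel gain h = (re, im); |h|^2 *)
Definition cabs2 (h : R * R) : R := fst h * fst h + snd h * snd h.

Definition log2 (x : R) : R := ln x / ln 2.

(* Interference-plus-noise term D_k; users indexed 0..K-1.
   p j : power, h j : complex gain, s j : spreading code,
   d : receive filter of user k, sigma2 : noise variance of user k. *)
Definition Dk (K N : nat) (k : nat) (p : nat -> R) (h : nat -> R * R)
  (s : nat -> nat -> R) (d : nat -> R) (sigma2 : R) : R :=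
  sum_f_R0 (fun j => if Nat.eq_dec j k then 0
                     else p j * cabs2 (h j) * (dot N d (s j))^2) (pred K)
  + sigma2 * dot N d d.

Definition sinr (K N k : nat) (p : nat -> R) (h : nat -> R * R)
  (s : nat -> nat -> R) (d : nat -> R) (sigma2 : R) : R :=
  p k * cabs2 (h k) / Dk K N k p h s d sigma2.

Definition utility (K N k : nat) (p : nat -> R) (h : nat -> R * R)
  (s : nat -> nat -> R) (d : nat -> R) (sigma2 : R)
  (L M : nat) (w pc theta : R) : R :=
  let g := sinr K N k p h s d sigma2 in
  (INR L / INR M) * w * log2 (1 + theta * g) * (1 - exp (- g)) ^ M / (p k + pc).

Definition upd (p : nat -> R) (k : nat) (x : R) : nat -> R :=
  fun j => if Nat.eq_dec j k then x else p j.

Definition theta_of_ber (ber : R) : R := - 1.5 / ln (5 * ber).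

(* With the other powers fixed, the SINR of user k is gamma = c x with the
   positive constant c = |h_k|^2 / D_k, so the utility is a nonnegative constant
   times  f(x) = ln (1 + a c x) (1 - e^{-c x})^M / (x + p_c),  a = theta_k > 0.
   Since f(0) = 0 <= f, it suffices to treat x > 0, where f > 0 and
   G = ln f has derivative  G'(x) = Q(x) / (x + p_c)  with
     Q(x) = a c (x+p_c)/((1+acx) ln(1+acx)) + M c (x+p_c)/(e^{cx}-1) - 1.
   Both fractions are nonincreasing in x, hence so is Q: G' changes sign at most
   once, from + to -, which makes G (and thus f) quasiconcave. *)

From Coquelicot Require Import Coquelicot.
From Stdlib Require Import Reals Lra Psatz.
Open Scope R_scope.

Lemma nondecreasing_of_derive_nonneg (F dF : R -> R) (a b : R) :
  (forall x, a <= x <= b -> is_derive F x (dF x)) ->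
  (forall x, a <= x <= b -> 0 <= dF x) ->
  a <= b -> F a <= F b.
Proof.
  intros HF Hd Hab.
  destruct (MVT_gen F a b dF) as [c [Hc Hmvt]];
    rewrite ?Rmin_left, ?Rmax_right in * by lra.
  - intros x Hx; apply HF; lra.
  - intros x Hx; apply continuity_pt_filterlim, (ex_derive_continuous F).
    exists (dF x); apply HF; lra.
  - assert (0 <= dF c) by (apply Hd; lra). nra.
Qed.

Lemma nonincreasing_of_derive_nonpos (F dF : R -> R) (a b : R) :
  (forall x, a <= x <= b -> is_derive F x (dF x)) ->
  (forall x, a <= x <= b -> dF x <= 0) ->
  a <= b -> F b <= F a.
Proof.
  intros HF Hd Hab.
  enough (- F a <= - F b) by lra.
  apply (nondecreasing_of_derive_nonneg (fun t => - F t) (fun t => - dF t)); auto.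
  - intros x Hx; exact (is_derive_opp F x (dF x) (HF x Hx)).
  - intros x Hx; specialize (Hd x Hx); lra.
Qed.

(* If G' = Q * r with r > 0 and Q nonincreasing on (lo, oo), then G is
   quasiconcave there: G increases up to the sign change of Q, then decreases. *)
Lemma quasiconcave_of_derive_sign (G Q r : R -> R) (lo : R) :
  (forall x, lo < x -> is_derive G x (Q x * r x)) ->
  (forall x, lo < x -> 0 < r x) ->
  (forall x z, lo < x -> x <= z -> Q z <= Q x) ->
  forall u y v, lo < u -> u <= y -> y <= v -> Rmin (G u) (G v) <= G y.
Proof.
  intros HG Hr HQ u y v Hu Huy Hyv.
  destruct (Rle_lt_dec 0 (Q y)) as [Qy_nonneg | Qy_neg].
  - apply Rle_trans with (G u); [apply Rmin_l |].
    apply (nondecreasing_of_derive_nonneg G (fun x => Q x * r x)); auto.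
    + intros x Hx; apply HG; lra.
    + intros x Hx.
      assert (Q y <= Q x) by (apply HQ; lra).
      assert (0 < r x) by (apply Hr; lra). nra.
  - apply Rle_trans with (G v); [apply Rmin_r |].
    apply (nonincreasing_of_derive_nonpos G (fun x => Q x * r x)); auto.
    + intros x Hx; apply HG; lra.
    + intros x Hx.
      assert (Q x <= Q y) by (apply HQ; lra).
      assert (0 < r x) by (apply Hr; lra). nra.
Qed.

Lemma ln_1p_le s : 0 <= s -> ln (1 + s) <= s.
Proof.
  intros Hs. rewrite <- (ln_exp s) at 2.
  apply ln_le; [lra | apply exp_ineq1_le].
Qed.

Lemma ln_1p_pos s : 0 < s -> 0 < ln (1 + s).
Proof. intros Hs. rewrite <- ln_1. apply ln_increasing; lra. Qed.

Lemma exp_gt_1 s : 0 < s -> 1 < exp s.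
Proof. intros Hs. pose proof (exp_ineq1 s ltac:(lra)). lra. Qed.

Lemma exp_neg_bounds s : 0 < s -> 0 < exp (- s) < 1.
Proof.
  intros Hs. split; [apply exp_pos |].
  rewrite <- exp_0. apply exp_increasing. lra.
Qed.

Section EnergyEfficiency.
Variables a c pc : R.
Variable M : nat.
Hypothesis Ha : 0 < a.
Hypothesis Hc : 0 < c.
Hypothesis Hpc : 0 < pc.
Hypothesis HM : (1 <= M)%nat.

(* The utility up to a positive factor; a = gap theta, c = channel-to-interference ratio. *)
Definition energy_eff (x : R) : R :=
  ln (1 + a * (c * x)) * (1 - exp (- (c * x))) ^ M / (x + pc).

Definition log_energy_eff (x : R) : R :=
  ln (ln (1 + a * (c * x))) + INR M * ln (1 - exp (- (c * x))) - ln (x + pc).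

(* The two fractions in the derivative of log_energy_eff, and the resulting
   score Q with  (log_energy_eff)' = score / (x + pc). *)
Definition rate_ratio (x : R) : R :=
  (x + pc) / ((1 + a * (c * x)) * ln (1 + a * (c * x))).

Definition success_ratio (x : R) : R := (x + pc) / (exp (c * x) - 1).

Definition score (x : R) : R :=
  a * c * rate_ratio x + INR M * c * success_ratio x - 1.

Let snr_pos x : 0 < x -> 0 < a * (c * x).
Proof. intros Hx. apply Rmult_lt_0_compat; nra. Qed.

(* The derivative of rate_ratio has numerator ln(1+s)(1 - a c pc) - s - a c pc < 0, s = acx,
   because ln(1+s) <= s. *)
Lemma rate_ratio_nonincreasing x z : 0 < x -> x <= z -> rate_ratio z <= rate_ratio x.
Proof.
  intros Hx Hxz.
  apply (nonincreasing_of_derive_nonpos rate_ratio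
    (fun t => (ln (1 + a * (c * t)) * (1 - a * c * pc) - a * c * t - a * c * pc)
              / ((1 + a * (c * t)) * ln (1 + a * (c * t))) ^ 2)); auto.
  - intros t Ht. pose proof (snr_pos t ltac:(lra)) as Hs.
    pose proof (ln_1p_pos _ Hs).
    unfold rate_ratio. auto_derive.
    + repeat split; try lra. apply Rgt_not_eq. nra.
    + field. split; apply Rgt_not_eq; nra.
  - intros t Ht. pose proof (snr_pos t ltac:(lra)) as Hs.
    pose proof (ln_1p_pos _ Hs). pose proof (ln_1p_le _ (Rlt_le _ _ Hs)).
    assert (0 < a * c * pc) by (apply Rmult_lt_0_compat; nra).
    apply Rlt_le, Rdiv_neg_pos; [| apply pow_lt; nra].
    destruct (Rle_lt_dec 1 (a * c * pc)); nra.
Qed.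

(* The derivative of success_ratio has numerator e^{ct} - 1 - (t + pc) c e^{ct} < 0,
   because e^{-ct} >= 1 - ct. *)
Lemma success_ratio_nonincreasing x z :
  0 < x -> x <= z -> success_ratio z <= success_ratio x.
Proof.
  intros Hx Hxz.
  apply (nonincreasing_of_derive_nonpos success_ratio
    (fun t => ((exp (c * t) - 1) - (t + pc) * (c * exp (c * t))) / (exp (c * t) - 1) ^ 2));
    auto.
  - intros t Ht. pose proof (exp_gt_1 (c * t) ltac:(nra)).
    unfold success_ratio. auto_derive.
    + repeat split; lra.
    + field. lra.
  - intros t Ht. pose proof (exp_gt_1 (c * t) ltac:(nra)).
    (* e^{ct} - 1 <= c t e^{ct}, from e^{-ct} >= 1 - c t *)
    assert (exp (c * t) * (1 - c * t) <= 1).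
    { assert (exp (c * t) * exp (- (c * t)) = 1)
        by (rewrite <- exp_plus, Rplus_opp_r; apply exp_0).
      pose proof (exp_ineq1_le (- (c * t))). nra. }
    assert (0 < pc * (c * exp (c * t))) by (apply Rmult_lt_0_compat; nra).
    apply Rlt_le, Rdiv_neg_pos; [nra | apply pow_lt; lra].
Qed.

(* A nonnegative combination of nonincreasing functions. *)
Lemma score_nonincreasing x z : 0 < x -> x <= z -> score z <= score x.
Proof.
  intros Hx Hxz. unfold score.
  pose proof (rate_ratio_nonincreasing x z Hx Hxz).
  pose proof (success_ratio_nonincreasing x z Hx Hxz).
  assert (0 < INR M) by (apply lt_0_INR; lia).
  assert (0 < a * c) by nra. assert (0 < INR M * c) by nra. nra.
Qed.

Lemma log_energy_eff_derive x :
  0 < x -> is_derive log_energy_eff x (score x * / (x + pc)).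
Proof.
  intros Hx. pose proof (snr_pos x Hx) as Hs. pose proof (ln_1p_pos _ Hs).
  pose proof (exp_neg_bounds (c * x) ltac:(nra)).
  pose proof (exp_gt_1 (c * x) ltac:(nra)).
  unfold log_energy_eff, score, rate_ratio, success_ratio. auto_derive.
  - repeat split; lra.
  - rewrite exp_Ropp. field. repeat split; try lra; apply Rgt_not_eq; nra.
Qed.

Lemma energy_eff_pos x : 0 < x -> 0 < energy_eff x.
Proof.
  intros Hx. pose proof (ln_1p_pos _ (snr_pos x Hx)).
  pose proof (exp_neg_bounds (c * x) ltac:(nra)).
  unfold energy_eff. apply Rdiv_lt_0_compat; [| lra].
  apply Rmult_lt_0_compat; [lra | apply pow_lt; lra].
Qed.

Lemma energy_eff_0 : energy_eff 0 = 0.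
Proof. unfold energy_eff. rewrite !Rmult_0_r, Rplus_0_r, ln_1. field. lra. Qed.

Lemma ln_energy_eff x : 0 < x -> ln (energy_eff x) = log_energy_eff x.
Proof.
  intros Hx. pose proof (ln_1p_pos _ (snr_pos x Hx)).
  pose proof (exp_neg_bounds (c * x) ltac:(nra)).
  assert (0 < (1 - exp (- (c * x))) ^ M) by (apply pow_lt; lra).
  unfold energy_eff, log_energy_eff, Rdiv.
  rewrite ln_mult, ln_mult, ln_pow, ln_Rinv;
    try apply Rmult_lt_0_compat; try apply Rinv_0_lt_compat; lra.
Qed.

Theorem energy_eff_quasiconcave u y v :
  0 <= u -> u <= y -> y <= v -> Rmin (energy_eff u) (energy_eff v) <= energy_eff y.
Proof.
  intros Hu Huy Hyv. destruct (Req_dec u 0) as [-> | Hu0].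
  - rewrite energy_eff_0. apply Rle_trans with 0; [apply Rmin_l |].
    destruct (Req_dec y 0) as [-> | Hy0]; [rewrite energy_eff_0; lra |].
    apply Rlt_le, energy_eff_pos; lra.
  - assert (Hlog : Rmin (log_energy_eff u) (log_energy_eff v) <= log_energy_eff y).
    { apply (quasiconcave_of_derive_sign log_energy_eff score (fun x => / (x + pc)) 0);
        try lra.
      - exact log_energy_eff_derive.
      - intros x Hx; apply Rinv_0_lt_compat; lra.
      - exact score_nonincreasing. }
    rewrite <- !ln_energy_eff in Hlog by lra.
    (* ln is increasing: min (f u) (f v) > f y would give the same for ln f *)
    apply Rnot_lt_le; intros Hlt.
    assert (Hfy : 0 < energy_eff y) by (apply energy_eff_pos; lra).
    assert (Hfu : energy_eff y < energy_eff u) by (eapply Rlt_le_trans; [exact Hlt | apply Rmin_l]).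
    assert (Hfv : energy_eff y < energy_eff v) by (eapply Rlt_le_trans; [exact Hlt | apply Rmin_r]).
    apply (Rlt_not_le _ _ (Rmin_glb_lt _ _ _ (ln_increasing _ _ Hfy Hfu)
                                             (ln_increasing _ _ Hfy Hfv)) Hlog).
Qed.

End EnergyEfficiency.

Lemma sum_f_R0_nonneg (u : nat -> R) n :
  (forall i, (i <= n)%nat -> 0 <= u i) -> 0 <= sum_f_R0 u n.
Proof.
  induction n as [| n IH]; intros Hu; simpl; [apply Hu; lia |].
  apply Rplus_le_le_0_compat; [apply IH; intros; apply Hu | apply Hu]; lia.
Qed.

Lemma dot_self_pos (N : nat) (x y : nat -> R) : dot N x y <> 0 -> 0 < dot N x x.
Proof.
  unfold dot. generalize (pred N) as n.
  induction n as [| n IH]; simpl; intros Hxy.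
  - destruct (Req_dec (x 0%nat) 0) as [E | E]; [rewrite E in Hxy; lra | nra].
  - assert (0 <= x (S n) * x (S n)) by nra.
    destruct (Req_dec (sum_f_R0 (fun i => x i * y i) n) 0) as [E | E].
    + rewrite E in Hxy.
      assert (x (S n) <> 0) by (intros Z; rewrite Z in Hxy; lra).
      assert (0 < x (S n) * x (S n)) by nra.
      pose proof (sum_f_R0_nonneg (fun i => x i * x i) n (fun i _ => ltac:(nra))).
      lra.
    + pose proof (IH E). lra.
Qed.

Lemma cabs2_pos (z : R * R) : z <> (0, 0) -> 0 < cabs2 z.
Proof.
  destruct z as [u v]; unfold cabs2; simpl; intros Hz.
  destruct (Req_dec u 0); destruct (Req_dec v 0); subst; try nra. congruence.
Qed.

Lemma Dk_upd K N k p h s d sigma2 x :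
  Dk K N k (upd p k x) h s d sigma2 = Dk K N k p h s d sigma2.
Proof.
  unfold Dk. f_equal. apply sum_eq. intros i _. unfold upd.
  destruct (Nat.eq_dec i k); reflexivity.
Qed.

(* The noise term alone is positive since d_k^T s_k = 1 forces d_k <> 0. *)
Lemma Dk_pos K N k p h s d sigma2 :
  (k < K)%nat -> (forall j, (j < K)%nat -> 0 <= p j) -> dot N d (s k) = 1 ->
  0 < sigma2 ->
  0 < Dk K N k p h s d sigma2.
Proof.
  intros HkK Hp Hds Hsig. unfold Dk.
  assert (0 < dot N d d) by (apply (dot_self_pos N d (s k)); lra).
  apply Rplus_le_lt_0_compat; [| nra].
  apply sum_f_R0_nonneg. intros i Hi. destruct (Nat.eq_dec i k); [lra |].
  assert (0 <= cabs2 (h i)) by (unfold cabs2; nra).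
  pose proof (Hp i ltac:(lia)).
  apply Rmult_le_pos; [nra | apply pow2_ge_0].
Qed.

Lemma theta_of_ber_pos ber : 0 < ber < 1/5 -> 0 < theta_of_ber ber.
Proof.
  intros Hber. unfold theta_of_ber.
  assert (Hln : ln (5 * ber) < 0) by (rewrite <- ln_1; apply ln_increasing; lra).
  pose proof (Rinv_lt_0_compat _ Hln). unfold Rdiv. nra.
Qed.

Lemma utility_upd K N k p h s d sigma2 L M w pc theta x :
  (1 <= M)%nat -> 0 < Dk K N k p h s d sigma2 -> 0 <= x -> 0 < pc ->
  utility K N k (upd p k x) h s d sigma2 L M w pc theta
  = INR L / INR M * w / ln 2
    * energy_eff theta (cabs2 (h k) / Dk K N k p h s d sigma2) pc M x.
Proof.
  intros HM HD Hx Hpc. unfold utility, sinr, energy_eff, log2.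
  rewrite Dk_upd.
  replace (upd p k x k) with x by (unfold upd; destruct (Nat.eq_dec k k); congruence).
  assert (0 < INR M) by (apply lt_0_INR; lia). pose proof ln_lt_2.
  replace (x * cabs2 (h k) / Dk K N k p h s d sigma2)
    with (cabs2 (h k) / Dk K N k p h s d sigma2 * x) by (field; lra).
  field. repeat split; lra.
Qed.

Lemma Rmin_scale_le (A a b y : R) :
  0 <= A -> Rmin a b <= y -> Rmin (A * a) (A * b) <= A * y.
Proof.
  intros HA Hmin.
  destruct (Rle_lt_dec a b) as [Hab | Hab];
    [ rewrite Rmin_left in Hmin by lra; apply Rle_trans with (A * a); [apply Rmin_l |]
    | rewrite Rmin_right in Hmin by lra; apply Rle_trans with (A * b); [apply Rmin_r |] ];
    apply Rmult_le_compat_l; lra.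
Qed.

Theorem lemma1 (K N : nat) (k : nat) (p : nat -> R) (h : nat -> R * R)
  (s : nat -> nat -> R) (d : nat -> R) (sigma2 : R)
  (L M : nat) (w pc Pmax ber : R) :
  (1 <= N)%nat -> (k < K)%nat ->
  (forall j, (j < K)%nat -> 0 <= p j) ->
  (forall j, (j < K)%nat -> h j <> (0, 0)) ->
  (forall j, (j < K)%nat -> dot N (s j) (s j) = 1) ->
  dot N d (s k) = 1 ->
  0 < sigma2 ->
  0 < w -> (1 <= M)%nat -> (L <= M)%nat ->
  0 < pc -> 0 < Pmax -> 0 < ber < 1/5 ->
  forall x1 x2 lam : R,
    0 <= x1 <= Pmax -> 0 <= x2 <= Pmax -> x1 <> x2 -> 0 < lam < 1 ->
    utility K N k (upd p k (lam * x1 + (1 - lam) * x2)) h s d sigma2 L M w pc (theta_of_ber ber)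
    >= Rmin (utility K N k (upd p k x1) h s d sigma2 L M w pc (theta_of_ber ber))
            (utility K N k (upd p k x2) h s d sigma2 L M w pc (theta_of_ber ber)).
Proof.
  intros _ HkK Hp Hh _ Hds Hsig Hw HM _ Hpc _ Hber x1 x2 lam Hx1 Hx2 _ Hlam.
  set (D := Dk K N k p h s d sigma2).
  assert (HD : 0 < D) by exact (Dk_pos K N k p h s d sigma2 HkK Hp Hds Hsig).
  assert (Hgain : 0 < cabs2 (h k) / D)
    by (apply Rdiv_lt_0_compat; [apply cabs2_pos, Hh, HkK | exact HD]).
  assert (Hscale : 0 <= INR L / INR M * w / ln 2).
  { assert (0 < INR M) by (apply lt_0_INR; lia).
    pose proof (pos_INR L). pose proof ln_lt_2.
    apply Rdiv_le_0_compat; [apply Rmult_le_pos; [apply Rdiv_le_0_compat |] |]; lra. }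
  assert (Hy : 0 <= lam * x1 + (1 - lam) * x2) by nra.
  rewrite !(utility_upd K N k p h s d sigma2 L M w pc) by (assumption || lra).
  fold D. apply Rle_ge, Rmin_scale_le; [exact Hscale |].
  pose proof (energy_eff_quasiconcave (theta_of_ber ber) (cabs2 (h k) / D) pc M
                (theta_of_ber_pos ber Hber) Hgain Hpc HM) as Hqc.
  destruct (Rle_lt_dec x1 x2) as [H12 | H21].
  - apply Hqc; nra.
  - rewrite Rmin_comm. apply Hqc; nra.
Qed.
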